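(* Let $m,n$ be positive integers, $(X,\mu)$ a measure space and $\{\psi_{i,j}\}_{1\le i\le 2m,\,1\le j\le 2n}$ complex-valued functions on $X$. Suppose $$R(i_1,\dots,i_{2m})=\int_X\prod_{s=1}^m\det\begin{pmatrix}\psi_{2s-1,i_{2s-1}}(x)&\psi_{2s-1,i_{2s}}(x)\\ \psi_{2s,i_{2s-1}}(x)&\psi_{2s,i_{2s}}(x)\end{pmatrix}\mu(\mathrm{d}x)$$ is well-defined for all $1\le i_1,\dots,i_{2m}\le 2n$. Then $$\frac{1}{n!}\int_{X^n}\prod_{s=1}^m\det\big(\psi_{2s-1,j}(x_k)\,\big|\,\psi_{2s,j}(x_k)\big)_{1\le j\le 2n,\,1\le k\le n}\prod_{j=1}^n\mu(\mathrm{d}x_j)=\mathrm{Pf}^{[2m]}\big(R(i_1,\dots,i_{2m})\big)_{1\le i_1,\dots,i_{2m}\le 2n}.$$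
   Context: $\det(a_{j,k}\,|\,b_{j,k})_{1\le j\le 2n,1\le k\le n}$ denotes the determinant of the $2n\times 2n$ matrix whose $j$-th row is $(a_{j,1},b_{j,1},a_{j,2},b_{j,2},\dots,a_{j,n},b_{j,n})$. The array $R$ changes sign when $i_{2s-1}$ and $i_{2s}$ are interchanged, for each $s$. For such an array $B$ indexed by $\{1,\dots,2n\}^{2m}$, with $\mathfrak{E}_{2n}=\{\sigma\in\mathfrak{S}_{2n}:\sigma(2i-1)<\sigma(2i),\ 1\le i\le n\}$, $$\mathrm{Pf}^{[2m]}(B):=\frac{1}{n!}\sum_{\sigma_1,\dots,\sigma_m\in\mathfrak{E}_{2n}}\mathrm{sgn}(\sigma_1)\cdots\mathrm{sgn}(\sigma_m)\prod_{i=1}^nB(\sigma_1(2i-1),\sigma_1(2i),\dots,\sigma_m(2i-1),\sigma_m(2i)).$$ *)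

From mathcomp Require Import all_boot all_algebra all_fingroup.
From mathcomp Require Import all_classical all_reals all_analysis.
From mathcomp Require Import complex.

Set Implicit Arguments.
Unset Strict Implicit.
Unset Printing Implicit Defensive.

Import GRing.Theory Num.Theory.
Local Open Scope ring_scope.

Lemma ev_ord_proof n (i : 'I_n) : ((i : nat).*2 < n.*2)%N.
Proof. by rewrite ltn_double. Qed.
Lemma od_ord_proof n (i : 'I_n) : ((i : nat).*2.+1 < n.*2)%N.
Proof. by rewrite ltn_Sdouble. Qed.
Definition ev_ord n (i : 'I_n) : 'I_(n.*2) := Ordinal (ev_ord_proof i).
Definition od_ord n (i : 'I_n) : 'I_(n.*2) := Ordinal (od_ord_proof i).

Lemma half_ord_proof n (c : 'I_(n.*2)) : ((c : nat)./2 < n)%N.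
Proof.
have := ltn_ord c; rewrite -[in X in X -> _](odd_double_half c).
case: (odd c) => /=; rewrite ?add0n ?add1n.
- by rewrite ltn_Sdouble.
- by rewrite ltn_double.
Qed.
Definition half_ord n (c : 'I_(n.*2)) : 'I_n := Ordinal (half_ord_proof c).

Section Complex_integral.
Context {d : measure_display} {T : measurableType d} {R : realType}.
Variable mu : {measure set T -> \bar R}.

Definition cintegral (f : T -> R[i]) : R[i] :=
  Complex (Rintegral mu setT (fun x => complex.Re (f x)))
          (Rintegral mu setT (fun x => complex.Im (f x))).

Definition cintegrable (f : T -> R[i]) : Prop :=
  mu.-integrable setT (fun x => (complex.Re (f x))%:E) /\
  mu.-integrable setT (fun x => (complex.Im (f x))%:E).

(* Integral over T^n with respect to the n-fold product measure mu^{(x) n},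
   computed as an iterated integral  int dx_1 ... int dx_n f(x_1,...,x_n). *)
Fixpoint cintegral_pow (n : nat) : (n.-tuple T -> R[i]) -> R[i] :=
  match n return (n.-tuple T -> R[i]) -> R[i] with
  | 0 => fun f => f [tuple]
  | n'.+1 => fun f => cintegral (fun x => cintegral_pow (fun t => f [tuple of x :: t]))
  end.
End Complex_integral.

(* An index tuple (i_1,...,i_2m) is a finite function 'I_(m.*2) -> 'I_(n.*2);
   E_{2n} = permutations sigma with sigma(2i) < sigma(2i+1) (0-based). *)
Definition Eperm n (s : 'S_(n.*2)) : bool :=
  [forall i : 'I_n, (s (ev_ord i) < s (od_ord i))%N].

Definition hyperpf {C : comUnitRingType} (m n : nat)
    (B : {ffun 'I_(m.*2) -> 'I_(n.*2)} -> C) : C :=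
  (n`!%:R)^-1 *
  \sum_(sg : {ffun 'I_m -> 'S_(n.*2)} | [forall s, Eperm (sg s)])
    ((\prod_(s < m) (-1) ^+ (odd_perm (sg s))) *
     \prod_(i < n) B [ffun t : 'I_(m.*2) =>
                        sg (half_ord t) (if odd t then od_ord i else ev_ord i)]).

From mathcomp Require Import all_boot all_algebra all_fingroup.
From mathcomp Require Import all_classical all_reals all_analysis.
From mathcomp Require Import complex ring.

Set Implicit Arguments.
Unset Strict Implicit.
Unset Printing Implicit Defensive.

Import GRing.Theory Num.Theory.
Local Open Scope ring_scope.

(* Expanding a 2n x 2n determinant whose columns come in n pairs gives de Bruijn's formula
     det (F | G) = sum_(s in E_2n) sgn s * prod_i (F_s(2i) G_s(2i+1) - F_s(2i+1) G_s(2i)):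
   starting from Leibniz's formula, the permutations reversing the pair i are folded, one
   pair at a time, onto their composites with the transposition (2i 2i+1), which flips the
   sign and swaps the two entries of the pair.  Multiplying the m expansions turns the
   integrand on X^n into a sum, over families (s_1, ..., s_m) in E_2n^m, of products
   prod_k g_k (x_k) of functions of one variable each; the iterated integral of such a
   product factorises, and the integral of g_k is the entry of R indexed by
   (s_1(2k-1), s_1(2k), ..., s_m(2k-1), s_m(2k)). *)

Section ColumnPairs.
Variable n : nat.
Implicit Types (i j : 'I_n) (s : 'S_(n.*2)).

Lemma half_ev_ord i : half_ord (ev_ord i) = i.
Proof. by apply: val_inj; rewrite /= doubleK. Qed.

Lemma half_od_ord i : half_ord (od_ord i) = i.
Proof. by apply: val_inj; rewrite /= uphalf_double. Qed.

Lemma odd_ev_ord i : odd (ev_ord i) = false.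
Proof. by rewrite /= odd_double. Qed.

Lemma odd_od_ord i : odd (od_ord i) = true.
Proof. by rewrite /= odd_double. Qed.

Lemma eq_ev_od_ord i j : (ev_ord i == od_ord j) = false.
Proof.
by apply/negbTE/eqP => /(congr1 (fun c : 'I_(n.*2) => odd c)); rewrite odd_ev_ord odd_od_ord.
Qed.

Lemma ev_ord_inj : injective (@ev_ord n).
Proof. by move=> i j /(congr1 (@half_ord n)); rewrite !half_ev_ord. Qed.

Lemma od_ord_inj : injective (@od_ord n).
Proof. by move=> i j /(congr1 (@half_ord n)); rewrite !half_od_ord. Qed.

Lemma big_ord_double (R : Type) (idx : R) (op : Monoid.com_law idx)
    (h : 'I_(n.*2) -> R) :
  \big[op/idx]_c h c = \big[op/idx]_(i < n) op (h (ev_ord i)) (h (od_ord i)).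
Proof.
rewrite (partition_big (@half_ord n) xpredT) //=; apply: eq_bigr => i _.
rewrite (bigD1 (ev_ord i)) ?half_ev_ord //= (big_pred1 (od_ord i)) // => c /=.
apply/andP/eqP => [[/eqP <- ne]|->]; last by rewrite half_od_ord eq_sym eq_ev_od_ord.
apply: val_inj; move: ne (odd_double_half c).
case: (odd c) => /= [_ e|/eqP ne e]; first by rewrite -{1}e.
by exfalso; apply: ne; apply: val_inj => /=; rewrite -[LHS]e.
Qed.

Definition ordered_pair s i := (s (ev_ord i) < s (od_ord i))%N.

Definition ordered_upto (k : nat) s :=
  [forall i : 'I_n, (i < k)%N ==> ordered_pair s i].

Definition pair_swap i : 'S_(n.*2) := tperm (ev_ord i) (od_ord i).

Lemma ordered_upto0 s : ordered_upto 0 s.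
Proof. exact/forallP. Qed.

Lemma ordered_upto_Eperm s : ordered_upto n s = Eperm s.
Proof. by apply: eq_forallb => i; rewrite ltn_ord. Qed.

Lemma ordered_uptoS i s : ordered_upto i.+1 s = ordered_upto i s && ordered_pair s i.
Proof.
apply/forallP/andP => [le_s|[/forallP lt_s s_i] j].
  split; last by have := le_s i; rewrite ltnSn.
  by apply/forallP => j; apply/implyP => /ltnW; exact/implyP/le_s.
apply/implyP; rewrite ltnS leq_eqVlt => /orP[/eqP/val_inj-> //|]; exact/implyP/lt_s.
Qed.

Lemma pair_swapM_ev i0 s i :
  (pair_swap i0 * s)%g (ev_ord i) = s (if i == i0 then od_ord i else ev_ord i).
Proof.
rewrite permM; have [->|ne] := eqVneq i i0; first by rewrite tpermL.
by rewrite tpermD // ?(inj_eq ev_ord_inj) eq_sym ?eq_ev_od_ord.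
Qed.

Lemma pair_swapM_od i0 s i :
  (pair_swap i0 * s)%g (od_ord i) = s (if i == i0 then ev_ord i else od_ord i).
Proof.
rewrite permM; have [->|ne] := eqVneq i i0; first by rewrite tpermR.
by rewrite tpermD ?eq_ev_od_ord // (inj_eq od_ord_inj) eq_sym.
Qed.

Lemma odd_pair_swapM i0 s : odd_perm (pair_swap i0 * s)%g = ~~ odd_perm s.
Proof. by rewrite odd_mul_tperm eq_ev_od_ord. Qed.

Lemma ordered_pair_swapM i0 s i : ordered_pair (pair_swap i0 * s)%g i =
  (if i == i0 then ~~ ordered_pair s i else ordered_pair s i).
Proof.
rewrite /ordered_pair pair_swapM_ev pair_swapM_od; case: eqP => // _.
by rewrite ltn_neqAle -leqNgt (inj_eq val_inj) (inj_eq perm_inj) eq_sym eq_ev_od_ord.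
Qed.

Lemma ordered_upto_swapM i0 s :
  ordered_upto i0 (pair_swap i0 * s)%g = ordered_upto i0 s.
Proof.
apply: eq_forallb => i; rewrite ordered_pair_swapM.
by case: eqP => [->|//]; rewrite ltnn.
Qed.
End ColumnPairs.

Section PairColumnDeterminant.
Variables (C : comPzRingType) (n : nat) (F G : 'I_(n.*2) -> 'I_n -> C).
Implicit Types (i : 'I_n) (s : 'S_(n.*2)).

Definition pair_diag i s := F (s (ev_ord i)) i * G (s (od_ord i)) i.
Definition pair_antidiag i s := F (s (od_ord i)) i * G (s (ev_ord i)) i.
Definition pair_minor i s := pair_diag i s - pair_antidiag i s.

Definition partial_minor (k : nat) s :=
  \prod_(i < n) (if (i < k)%N then pair_minor i s else pair_diag i s).

Lemma pair_diag_swapM i0 s i : pair_diag i (pair_swap i0 * s)%g =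
  (if i == i0 then pair_antidiag i s else pair_diag i s).
Proof.
by rewrite /pair_diag pair_swapM_ev pair_swapM_od; case: eqP => [->|].
Qed.

Lemma pair_antidiag_swapM i0 s i : pair_antidiag i (pair_swap i0 * s)%g =
  (if i == i0 then pair_diag i s else pair_antidiag i s).
Proof.
by rewrite /pair_antidiag pair_swapM_ev pair_swapM_od; case: eqP => [->|].
Qed.

Lemma partial_minorS i0 s :
  partial_minor i0.+1 s = partial_minor i0 s - partial_minor i0 (pair_swap i0 * s)%g.
Proof.
rewrite /partial_minor [LHS](bigD1 i0) // [X in _ = X - _](bigD1 i0) //.
rewrite [X in _ = _ - X](bigD1 i0) //= ltnSn ltnn pair_diag_swapM eqxx.
have -> : \prod_(i | i != i0) (if (i < i0.+1)%N then pair_minor i s else pair_diag i s) =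
          \prod_(i | i != i0) (if (i < i0)%N then pair_minor i s else pair_diag i s).
  apply: eq_bigr => i ne; rewrite ltnS leq_eqVlt.
  by rewrite (_ : (i == i0 :> nat) = false) //; apply: negbTE.
under [X in _ = _ - _ * X]eq_bigr => i /negbTE ne.
  rewrite /pair_minor pair_diag_swapM pair_antidiag_swapM ne.
over.
by rewrite /pair_minor mulrBl.
Qed.

(* Split on whether the pair i0 is ordered, and reindex the unordered half by composing with
   pair_swap i0. *)
Lemma sum_partial_minorS i0 :
  \sum_(s | ordered_upto i0 s) (-1) ^+ s * partial_minor i0 s =
  \sum_(s | ordered_upto i0.+1 s) (-1) ^+ s * partial_minor i0.+1 s.
Proof.
rewrite (bigID (fun s => ordered_pair s i0)) /=.
rewrite [X in _ + X](reindex_inj (mulgI (pair_swap i0))) /=.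
rewrite (eq_bigl _ _ (fun s => esym (ordered_uptoS i0 s))).
under [X in _ + X]eq_bigl => s.
  rewrite ordered_upto_swapM ordered_pair_swapM eqxx negbK -ordered_uptoS.
over.
rewrite -big_split; apply: eq_bigr => s _ /=.
rewrite odd_pair_swapM partial_minorS.
by case: (odd_perm s); rewrite ?expr0 ?expr1 /=; ring.
Qed.

Lemma sum_partial_minor k : (k <= n)%N ->
  \sum_(s : 'S_(n.*2)) (-1) ^+ s * \prod_i pair_diag i s =
  \sum_(s | ordered_upto k s) (-1) ^+ s * partial_minor k s.
Proof.
elim: k => [_|k IHk lt_kn].
  by apply: eq_big => [s|s _]; rewrite ?ordered_upto0.
by rewrite (IHk (ltnW lt_kn)) (sum_partial_minorS (Ordinal lt_kn)).
Qed.

Lemma det_pair_columns :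
  \det (\matrix_(j, c) if odd c then G j (half_ord c) else F j (half_ord c)) =
  \sum_(s | Eperm s) (-1) ^+ s * \prod_i pair_minor i s.
Proof.
rewrite -det_tr /determinant.
under eq_bigr => s _.
  rewrite big_ord_double.
  under eq_bigr => i _ do rewrite !mxE odd_ev_ord odd_od_ord half_ev_ord half_od_ord.
over.
rewrite (sum_partial_minor (leqnn n)).
apply: eq_big => [s|s _]; first by rewrite ordered_upto_Eperm.
by congr (_ * _); apply: eq_bigr => i _; rewrite ltn_ord.
Qed.
End PairColumnDeterminant.

Lemma prod_det_pair_columns (C : comPzRingType) (m n : nat)
    (F G : 'I_m -> 'I_(n.*2) -> 'I_n -> C) :
  \prod_(s < m)
     \det (\matrix_(j, c) if odd c then G s j (half_ord c) else F s j (half_ord c)) =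
  \sum_(sg : {ffun 'I_m -> 'S_(n.*2)} | [forall s, Eperm (sg s)])
    (\prod_(s < m) (-1) ^+ sg s) *
    \prod_(i < n) \prod_(s < m) pair_minor (F s) (G s) i (sg s).
Proof.
under eq_bigr do rewrite det_pair_columns.
rewrite bigA_distr_big; apply: eq_big => [sg|sg _]; first exact/familyP/forallP.
by rewrite big_split /= exchange_big.
Qed.

Section ComplexIntegral.
Context {d : measure_display} {T : measurableType d} {R : realType}.
Variable mu : {measure set T -> \bar R}.
Implicit Types f g : T -> R[i].

Lemma cintegral0 : cintegral mu (fun=> 0) = 0.
Proof. by rewrite /cintegral /= /Rintegral integral0. Qed.

Lemma cintegrable0 : cintegrable mu (fun=> 0).
Proof. by split; exact: integrable0. Qed.

Lemma cintegrableD f g : cintegrable mu f -> cintegrable mu g ->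
  cintegrable mu (fun x => f x + g x).
Proof.
move=> [f1 f2] [g1 g2]; split.
- by apply: eq_integrable (integrableD _ f1 g1) => // x _; case: (f x); case: (g x).
- by apply: eq_integrable (integrableD _ f2 g2) => // x _; case: (f x); case: (g x).
Qed.

Lemma cintegralD f g : cintegrable mu f -> cintegrable mu g ->
  cintegral mu (fun x => f x + g x) = cintegral mu f + cintegral mu g.
Proof.
move=> [f1 f2] [g1 g2]; rewrite /cintegral; simpc; rewrite -!RintegralD //.
congr Complex.
all: by apply: eq_Rintegral => x _; case: (f x); case: (g x).
Qed.

Lemma cintegrableMr f k : cintegrable mu f -> cintegrable mu (fun x => f x * k).
Proof.
case: k => a b [f1 f2]; split.
- apply: eq_integrable (integrableB _ (integrableZl _ a f1) (integrableZl _ b f2)) => // x _.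
  by case: (f x) => ? ? /=; rewrite -EFinM -EFinD; congr (_%:E); ring.
- apply: eq_integrable (integrableD _ (integrableZl _ b f1) (integrableZl _ a f2)) => // x _.
  by case: (f x) => ? ? /=; rewrite -!EFinM -EFinD; congr (_%:E); ring.
Qed.

Lemma cintegralMr f k : cintegrable mu f ->
  cintegral mu (fun x => f x * k) = cintegral mu f * k.
Proof.
have integrableZl_fin (h : T -> R) r : mu.-integrable setT (EFin \o h) ->
    mu.-integrable setT (EFin \o (fun x => r * h x)).
  by move=> ih; apply: eq_integrable (integrableZl _ r ih) => // x _; rewrite /= EFinM.
case: k => a b [f1 f2]; rewrite /cintegral; simpc; congr Complex.
- transitivity (Rintegral mu setT (fun x => a * complex.Re (f x) - b * complex.Im (f x))).
    by apply: eq_Rintegral => x _; case: (f x) => ? ? /=; ring.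
  by rewrite RintegralB ?RintegralZl //; [ring|exact: integrableZl_fin..].
- transitivity (Rintegral mu setT (fun x => b * complex.Re (f x) + a * complex.Im (f x))).
    by apply: eq_Rintegral => x _; case: (f x) => ? ? /=; ring.
  by rewrite RintegralD ?RintegralZl //; [ring|exact: integrableZl_fin..].
Qed.

Lemma cintegrable_sum (I : Type) (r : seq I) (P : pred I) (h : I -> T -> R[i]) :
  (forall i, P i -> cintegrable mu (h i)) ->
  cintegrable mu (fun x => \sum_(i <- r | P i) h i x).
Proof.
elim: r => [_|i r IHr hP].
  by under eq_fun do rewrite big_nil; exact: cintegrable0.
under eq_fun do rewrite big_cons.
have [Pi|_] := boolP (P i); last exact: IHr.
by apply: cintegrableD; [exact: hP|exact: IHr].
Qed.

Lemma cintegral_sum (I : Type) (r : seq I) (P : pred I) (h : I -> T -> R[i]) :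
  (forall i, P i -> cintegrable mu (h i)) ->
  cintegral mu (fun x => \sum_(i <- r | P i) h i x) =
  \sum_(i <- r | P i) cintegral mu (h i).
Proof.
elim: r => [_|i r IHr hP].
  by under eq_fun do rewrite big_nil; rewrite big_nil cintegral0.
under eq_fun do rewrite big_cons.
rewrite big_cons; have [Pi|_] := boolP (P i); last exact: IHr.
rewrite cintegralD ?IHr //; [exact: hP|exact: cintegrable_sum].
Qed.

Lemma cintegral_pow_sum_prod n (A : finType) (P : pred A) (c : A -> R[i])
    (f : A -> 'I_n -> T -> R[i]) :
  (forall a i, cintegrable mu (f a i)) ->
  cintegral_pow mu (fun xs : n.-tuple T =>
    \sum_(a | P a) c a * \prod_i f a i (tnth xs i)) =
  \sum_(a | P a) c a * \prod_i cintegral mu (f a i).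
Proof.
elim: n c f => [|n IHn] c f f_int /=; first by apply: eq_bigr => a _; rewrite !big_ord0.
transitivity (cintegral mu (fun x => \sum_(a | P a) f a ord0 x *
    (c a * \prod_(i < n) cintegral mu (f a (lift ord0 i))))).
  congr cintegral; apply: funext => x.
  transitivity (\sum_(a | P a) (c a * f a ord0 x) *
      \prod_(i < n) cintegral mu (f a (lift ord0 i))); last first.
    by apply: eq_bigr => a _; rewrite -mulrA mulrCA.
  rewrite -IHn //; congr cintegral_pow; apply: funext => xs; apply: eq_bigr => a _.
  rewrite big_ord_recl mulrA; congr (_ * _).
  by apply: eq_bigr => i _; rewrite tnthS.
rewrite cintegral_sum => [|a _]; last exact: cintegrableMr.
by apply: eq_bigr => a _; rewrite cintegralMr // big_ord_recl mulrCA.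
Qed.
End ComplexIntegral.

Theorem proposition2p4 (R : realType) (d : measure_display) (X : measurableType d)
  (mu : {measure set X -> \bar R}) (m n : nat) (m_gt0 : (0 < m)%N) (n_gt0 : (0 < n)%N)
  (psi : 'I_(m.*2) -> 'I_(n.*2) -> X -> R[i]) :
  let Rint := fun (idx : {ffun 'I_(m.*2) -> 'I_(n.*2)}) (x : X) =>
    \prod_(s < m)
      (psi (ev_ord s) (idx (ev_ord s)) x * psi (od_ord s) (idx (od_ord s)) x
       - psi (ev_ord s) (idx (od_ord s)) x * psi (od_ord s) (idx (ev_ord s)) x) in
  (forall idx, cintegrable mu (Rint idx)) ->
  (n`!%:R)^-1 *
    cintegral_pow mu (fun xs : n.-tuple X =>
      \prod_(s < m) \det (\matrix_(j < n.*2, c < n.*2)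
         psi (if odd c then od_ord s else ev_ord s) j (tnth xs (half_ord c))))
  = hyperpf (fun idx => cintegral mu (Rint idx)).
Proof.
move=> Rint Rint_int; rewrite /hyperpf; congr (_ * _).
pose idx (sg : {ffun 'I_m -> 'S_(n.*2)}) (i : 'I_n) :=
  [ffun t : 'I_(m.*2) => sg (half_ord t) (if odd t then od_ord i else ev_ord i)].
rewrite -(cintegral_pow_sum_prod _ _ (fun sg i => Rint_int (idx sg i))).
congr cintegral_pow; apply: funext => xs.
pose F s j i := psi (ev_ord s) j (tnth xs i); pose G s j i := psi (od_ord s) j (tnth xs i).
transitivity (\prod_(s < m) \det (\matrix_(j, c)
    if odd c then G s j (half_ord c) else F s j (half_ord c))).
  by apply: eq_bigr => s _; congr (\det _); apply/matrixP => j c; rewrite !mxE; case: odd.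
rewrite prod_det_pair_columns; apply: eq_bigr => sg _; congr (_ * _).
apply: eq_bigr => i _; apply: eq_bigr => s _.
by rewrite !ffunE half_ev_ord half_od_ord odd_ev_ord odd_od_ord.
Qed.
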